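(* Let $F \in \mathcal{F}_{\text{PŁ}}(L,\mu,\tau,\nu)$, and suppose a herding subroutine with herding bound $H$ is available, with $n \ge H$. Run offline GraB for $K$ epochs from $\mathbf{x}_0^1$ with constant step size $$\eta = \frac{2}{\mu nK}W_0\left(\frac{\left(F(\mathbf{x}_0^1) - F^* + \nu^2/L\right)\mu^3n^2K^2}{192H^2L^2\nu^2}\right),$$ where $W_0$ is the principal branch of the Lambert W function. Then, for $K \gtrsim \kappa(\tau+1)$ with $\kappa := L/\mu$, $$F(\mathbf{x}_n^K) - F^* = \tilde{\mathcal{O}}\left(\frac{H^2L^2\nu^2}{\mu^3n^2K^2}\right).$$
   Context: Finite-sum problem: $F(\mathbf{x}) = \frac1n\sum_{i=1}^n f_i(\mathbf{x})$ on $\mathbb{R}^d$, $F^* = \inf F > -\infty$. $\mu$-PŁ condition: $\frac12\|\nabla F(\mathbf{x})\|^2 \ge \mu(F(\mathbf{x}) - F^* )$ for all $\mathbf{x}$. $\mathcal{F}_{\text{PŁ}}(L,\mu,\tau,\nu)$: all such $F$ with each $f_i$ $L$-smooth (not necessarily convex), $F$ satisfying the $\mu$-PŁ condition, and $\|\nabla f_i(\mathbf{x}) - \nabla F(\mathbf{x})\| \le \tau\|\nabla F(\mathbf{x})\| + \nu$ for all $i,\mathbf{x}$. Herding assumption with bound $H$: there is an algorithm that, given $\mathbf{z}_1,\dots,\mathbf{z}_n \in \mathbb{R}^d$ with $\|\mathbf{z}_i\| \le 1$ and $\sum_i \mathbf{z}_i = 0$, outputs a permutation $\sigma$ of $[n]$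 with $\max_{1\le k\le n}\|\sum_{i=1}^k \mathbf{z}_{\sigma(i)}\| \le H$ (applied to vectors after rescaling them to norm at most $1$, which does not change the output permutation's role). Offline GraB: given an initial order $\sigma_1$, for each epoch $k = 1,\dots,K$: for $i=1,\dots,n$ compute $\mathbf{z}_i = \nabla f_{\sigma_k(i)}(\mathbf{x}_{i-1}^k)$ and set $\mathbf{x}_i^k = \mathbf{x}_{i-1}^k - \eta\mathbf{z}_i$; then set $\mathbf{x}_0^{k+1} = \mathbf{x}_n^k$, $\mathbf{z} = \frac1n\sum_i\mathbf{z}_i$, and let $\sigma_{k+1}$ be the output of the herding algorithm on $\{\mathbf{z}_i - \mathbf{z}\}_{i=1}^n$. Notation: $K \gtrsim x$ means $K \ge Cx\log(\mathrm{poly}(n,K,\mu,L,\dots))$ for a numerical constant $C$; $\tilde{\mathcal{O}}(\cdot)$ hides universal constants and polylogarithmic factors. *)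

From HB Require Import structures.
From mathcomp Require Import all_boot all_order all_algebra all_fingroup.
From mathcomp Require Import all_classical all_reals all_analysis.
Set Implicit Arguments. Unset Strict Implicit. Unset Printing Implicit Defensive.
Import Order.TTheory GRing.Theory Num.Theory.
Import numFieldNormedType.Exports.
Local Open Scope classical_set_scope.
Local Open Scope ring_scope.

Section Defs.
Variables (R : realType) (d : nat).
Notation vec := 'rV[R]_d.

Definition dotv (u v : vec) : R := \sum_(j < d) u 0 j * v 0 j.
Definition norm2 (v : vec) : R := Num.sqrt (dotv v v).

Definition LambertW0 (x : R) : R :=
  xget 0 [set w : R | -1 <= w /\ w * expR w = x].

Definition is_gradient (f : vec -> R) (g : vec -> vec) : Prop :=
  forall x : vec, differentiable f x /\ forall h : vec, 'd f x h = dotv (g x) h.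

Variable n : nat.

Definition herding_bound (herd : ('I_n -> vec) -> 'S_n) (H : R) : Prop :=
  forall z : 'I_n -> vec,
    (forall i, norm2 (z i) <= 1) -> \sum_(i < n) z i = 0 ->
    forall k : nat, (1 <= k <= n)%N ->
      norm2 (\sum_(i < n | (i < k)%N) z (herd z i)) <= H.

Definition rescale (z : 'I_n -> vec) : 'I_n -> vec :=
  let c := \big[Num.max/0]_(i < n) norm2 (z i) in
  fun i => if c == 0 then z i else c^-1 *: z i.

Variables (g : 'I_n -> vec -> vec) (eta : R) (herd : ('I_n -> vec) -> 'S_n).

Definition order_seq (s : 'S_n) : seq 'I_n := [seq s i | i <- enum 'I_n].

Definition pass_iter (s : 'S_n) (x0 : vec) (m : nat) : vec :=
  foldl (fun y j => y - eta *: g j y) x0 (take m (order_seq s)).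

Definition epoch_grad (s : 'S_n) (x0 : vec) (j : 'I_n) : vec :=
  g j (pass_iter s x0 (index j (order_seq s))).

Definition next_order (s : 'S_n) (x0 : vec) : 'S_n :=
  let zbar := (n%:R)^-1 *: \sum_(j < n) epoch_grad s x0 j in
  herd (rescale (fun j => epoch_grad s x0 j - zbar)).

(* GraB_state k = (sigma_{k+1}, x_0^{k+1}) ; in particular the second
   component of GraB_state K is x_n^K *)
Fixpoint GraB_state (s1 : 'S_n) (x01 : vec) (k : nat) : 'S_n * vec :=
  match k with
  | 0 => (s1, x01)
  | k'.+1 => let st := GraB_state s1 x01 k' in
             (next_order st.1 st.2, pass_iter st.1 st.2 n)
  end.

End Defs.

(* Within epoch k the iterates stay within [drift k] / L of the epoch's
   starting point y_k.  The herding bound keeps the prefix sums of the centered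
   gradients of epoch k, in the herded order used by epoch k + 1, below H times
   their size, and by smoothness these differ from the centered gradients at
   y_(k+1) by O(drift k); so [drift] obeys a linear recursion with coefficient
   14 eta n L (1 + tau) <= 1/6.  An epoch is then a gradient step of length
   eta n up to an error of size [drift k], and smoothness with the PL
   inequality contracts F(y_(k+1)) - F* + eta n (drift k)^2 by
   1 - 3 eta n mu / 4, up to an additive O(eta n (eta L H nu)^2).  For the
   Lambert step size, eta n mu = 2 W / K with W e^W = a, the contraction over
   K epochs is e^-W = W / a, which balances the noise floor, and
   W <= ln (e + a) is logarithmic in the parameters.  If mu > 2 L, smoothness
   and PL force F = F* everywhere. *)

From HB Require Import structures.
From mathcomp Require Import all_boot all_order all_algebra all_fingroup.
From mathcomp Require Import all_classical all_reals all_analysis.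
From mathcomp Require Import lra ring.
Set Implicit Arguments. Unset Strict Implicit. Unset Printing Implicit Defensive.
Import Order.TTheory GRing.Theory Num.Theory.
Import numFieldNormedType.Exports.
Local Open Scope classical_set_scope.
Local Open Scope ring_scope.

Section EuclideanNorm.
Variables (R : realType) (d : nat).
Implicit Types (u v w : 'rV[R]_d).

Lemma dotvC u v : dotv u v = dotv v u.
Proof. by apply: eq_bigr => j _; rewrite mulrC. Qed.

Lemma dotvDl u v w : dotv (u + v) w = dotv u w + dotv v w.
Proof. by rewrite /dotv -big_split; apply: eq_bigr => j _; rewrite !mxE mulrDl. Qed.

Lemma dotvDr u v w : dotv w (u + v) = dotv w u + dotv w v.
Proof. by rewrite dotvC dotvDl !(dotvC w). Qed.

Lemma dotvZl a u v : dotv (a *: u) v = a * dotv u v.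
Proof. by rewrite /dotv mulr_sumr; apply: eq_bigr => j _; rewrite !mxE mulrA. Qed.

Lemma dotvZr a u v : dotv v (a *: u) = a * dotv v u.
Proof. by rewrite dotvC dotvZl dotvC. Qed.

Lemma dotvNl u v : dotv (- u) v = - dotv u v.
Proof. by rewrite -scaleN1r dotvZl mulN1r. Qed.

Lemma dotvNr u v : dotv v (- u) = - dotv v u.
Proof. by rewrite dotvC dotvNl dotvC. Qed.

Lemma dotvBl u v w : dotv (u - v) w = dotv u w - dotv v w.
Proof. by rewrite dotvDl dotvNl. Qed.

Lemma dotvBr u v w : dotv w (u - v) = dotv w u - dotv w v.
Proof. by rewrite dotvDr dotvNr. Qed.

Lemma dotv0l v : dotv 0 v = 0.
Proof. by rewrite /dotv big1 // => j _; rewrite mxE mul0r. Qed.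

Lemma dotv_suml (I : Type) (r : seq I) (P : pred I) (F : I -> 'rV[R]_d) v :
  dotv (\sum_(i <- r | P i) F i) v = \sum_(i <- r | P i) dotv (F i) v.
Proof.
elim/big_rec2: _ => [|i y1 y2 _ IH]; first by rewrite dotv0l.
by rewrite dotvDl IH.
Qed.

Lemma dotvv_ge0 v : 0 <= dotv v v.
Proof. by apply: sumr_ge0 => j _; rewrite -expr2 sqr_ge0. Qed.

Lemma dotvv_eq0 v : dotv v v = 0 -> v = 0.
Proof.
move=> /eqP; rewrite psumr_eq0 => [/allP v0|j _]; last by rewrite -expr2 sqr_ge0.
apply/rowP => j; rewrite mxE; have := v0 j (mem_index_enum j).
by rewrite /= -expr2 sqrf_eq0 => /eqP.
Qed.

Lemma norm2_ge0 v : 0 <= norm2 v.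
Proof. exact: sqrtr_ge0. Qed.

Lemma sqr_norm2 v : norm2 v ^+ 2 = dotv v v.
Proof. by rewrite /norm2 sqr_sqrtr // dotvv_ge0. Qed.

Lemma norm2_eq0 v : norm2 v = 0 -> v = 0.
Proof. by move=> v0; apply: dotvv_eq0; rewrite -sqr_norm2 v0 expr0n. Qed.

Lemma norm2_0 : norm2 (0 : 'rV[R]_d) = 0.
Proof. by rewrite /norm2 dotv0l sqrtr0. Qed.

Lemma norm2Z a v : norm2 (a *: v) = `|a| * norm2 v.
Proof.
by rewrite /norm2 dotvZl dotvZr mulrA -expr2 sqrtrM ?sqr_ge0 // sqrtr_sqr.
Qed.

Lemma norm2N v : norm2 (- v) = norm2 v.
Proof. by rewrite -scaleN1r norm2Z normrN1 mul1r. Qed.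

Lemma norm2_distC u v : norm2 (u - v) = norm2 (v - u).
Proof. by rewrite -norm2N opprB. Qed.

Lemma cauchy_schwarz u v : dotv u v <= norm2 u * norm2 v.
Proof.
set a := norm2 u; set b := norm2 v.
have a0 : 0 <= a := norm2_ge0 u; have b0 : 0 <= b := norm2_ge0 v.
have [/eqP|ab0] := eqVneq (a * b) 0.
  rewrite mulf_eq0 => /orP[] /eqP/norm2_eq0 ->; first by rewrite dotv0l mulr_ge0.
  by rewrite dotvC dotv0l mulr_ge0.
have ab_gt0 : 0 < a * b by rewrite lt_neqAle eq_sym ab0 mulr_ge0.
have := dotvv_ge0 (b *: u - a *: v).
rewrite dotvBl !dotvBr !dotvZl !dotvZr -!sqr_norm2 -/a -/b (dotvC v u) => sq_ge0.
have : a * b * dotv u v <= a * b * (a * b) by nra.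
by rewrite ler_pM2l.
Qed.

Lemma ler_norm2D u v : norm2 (u + v) <= norm2 u + norm2 v.
Proof.
have u0 := norm2_ge0 u; have v0 := norm2_ge0 v.
rewrite -(ler_pXn2r (n := 2)) ?nnegrE ?norm2_ge0 ?addr_ge0 //.
rewrite sqr_norm2 dotvDl !dotvDr -!sqr_norm2 (dotvC v u).
have := cauchy_schwarz u v; nra.
Qed.

Lemma ler_norm2_sum (I : Type) (r : seq I) (P : pred I) (F : I -> 'rV[R]_d) :
  norm2 (\sum_(i <- r | P i) F i) <= \sum_(i <- r | P i) norm2 (F i).
Proof.
elim/big_rec2: _ => [|i y1 y2 _ IH]; first by rewrite norm2_0.
by apply: le_trans (ler_norm2D _ _) _; rewrite lerD2l.
Qed.

End EuclideanNorm.

Lemma descent_lemma (R : realType) d (f : 'rV[R]_d -> R) g (L : R) :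
  0 <= L -> is_gradient f g ->
  (forall x y, norm2 (g x - g y) <= L * norm2 (x - y)) ->
  forall x y, f y <= f x + dotv (g x) (y - x) + L * norm2 (y - x) ^+ 2.
Proof.
move=> L0 gradf glip x y; set h := y - x.
pose phi t := f (x + t *: h).
have quotE t : (fun s : R => s^-1 *: ((phi \o shift t) (s *: 1) - phi t)) =
    (fun s => s^-1 *: ((f \o shift (x + t *: h)) (s *: h) - f (x + t *: h))).
  apply/funext => s /=; rewrite /phi; congr (_ *: (f _ - _)).
  by rewrite [s *: 1]mulr1 scalerDl addrCA.
have phi' t : is_derive t (1 : R) phi (dotv (g (x + t *: h)) h).
  have [fdiff df] := gradf (x + t *: h).
  split; first by have := diff_derivable (v := h) fdiff; rewrite /derivable quotE.
  by rewrite /derive quotE -/(derive f (x + t *: h) h) deriveE.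
have phi_cont : {within `[0, 1], continuous phi}.
  by apply: derivable_within_continuous => t _; case: (phi' t).
have [c /andP[c0 c1] mvt] := MVT ltr01 (fun t _ => phi' t) phi_cont.
have xh : x + h = y by rewrite /h addrCA subrr addr0.
move: mvt; rewrite /phi scale0r addr0 scale1r xh subr0 mulr1 => mvt.
have gap : norm2 (g (x + c *: h) - g x) <= L * norm2 h.
  apply: le_trans (glip _ _) _; rewrite addrAC subrr add0r norm2Z.
  rewrite ler_wpM2l // (ger0_norm (ltW c0)).
  by apply: ler_piMl; [exact: norm2_ge0 | exact: ltW].
have := cauchy_schwarz (g (x + c *: h) - g x) h; rewrite dotvBl.
have := ler_wpM2r (norm2_ge0 h) gap; rewrite -mulrA -expr2.
lra.
Qed.

Lemma ler_sum_const (R : numDomainType) n (P : pred 'I_n) (F : 'I_n -> R) c :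
  (forall i, P i -> F i <= c) -> 0 <= c -> \sum_(i < n | P i) F i <= n%:R * c.
Proof.
move=> Fc c0; rewrite big_mkcond /=; apply: le_trans (_ : \sum_(i < n) c <= _).
  by apply: ler_sum => i _; case: ifP => // /Fc.
by rewrite sumr_const card_ord mulr_natl.
Qed.

Lemma big_ord_ltS (V : nmodType) n (F : 'I_n -> V) m (lt_mn : (m < n)%N) :
  \sum_(i < n | (i < m.+1)%N) F i = \sum_(i < n | (i < m)%N) F i + F (Ordinal lt_mn).
Proof.
rewrite (bigD1 (Ordinal lt_mn)) //= addrC; congr (_ + _).
apply: eq_bigl => i; rewrite ltnS leq_eqVlt.
have [->|ne] := eqVneq i (Ordinal lt_mn); first by rewrite /= eqxx ltnn.
suff /negbTE -> : val i != m by rewrite andbT.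
by apply: contra ne => /eqP im; apply/eqP/val_inj.
Qed.

Lemma sqr_add3_le (R : realDomainType) (a b c : R) :
  (a + b + c) ^+ 2 <= 3 * a ^+ 2 + 3 * b ^+ 2 + 3 * c ^+ 2.
Proof. by have := sqr_ge0 (a - b); have := sqr_ge0 (b - c); have := sqr_ge0 (a - c); nra. Qed.

Lemma prod_le_exp_size (R : realDomainType) (S : R) (s : seq R) :
  all (fun x => 0 <= x <= S) s -> \prod_(x <- s) x <= S ^+ size s.
Proof.
elim: s => [|x s IH]; first by rewrite big_nil.
rewrite big_cons exprS /= => /andP[/andP[x0 xS] s_in].
apply: ler_pM => //; last exact: IH.
by rewrite big_seq; apply: prodr_ge0 => y /(allP s_in)/andP[].
Qed.

Section Epoch.
Variables (R : realType) (d n : nat) (g : 'I_n -> 'rV[R]_d -> 'rV[R]_d) (eta : R).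
Implicit Types (s : 'S_n) (x : 'rV[R]_d).

Lemma size_order_seq s : size (order_seq s) = n.
Proof. by rewrite size_map size_enum_ord. Qed.

Lemma nth_order_seq s (i : 'I_n) j0 : nth j0 (order_seq s) i = s i.
Proof. by rewrite (nth_map i) ?size_enum_ord ?ltn_ord // nth_ord_enum. Qed.

Lemma index_order_seq s (i : 'I_n) : index (s i) (order_seq s) = i.
Proof. by rewrite index_map ?index_enum_ord //; exact: perm_inj. Qed.

Lemma index_order_seq_lt s (j : 'I_n) : (index j (order_seq s) < n)%N.
Proof. by rewrite -(permKV s j) index_order_seq ltn_ord. Qed.

Lemma pass_iterS s x (i : 'I_n) :
  pass_iter g eta s x i.+1 =
  pass_iter g eta s x i - eta *: g (s i) (pass_iter g eta s x i).
Proof.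
rewrite /pass_iter (take_nth (s i)) ?size_order_seq ?ltn_ord //.
by rewrite foldl_rcons nth_order_seq.
Qed.

Lemma pass_iterE s x m : (m <= n)%N ->
  pass_iter g eta s x m =
  x - eta *: \sum_(i < n | (i < m)%N) g (s i) (pass_iter g eta s x i).
Proof.
elim: m => [_|m IH lt_mn].
  by rewrite big_pred0 ?scaler0 ?subr0 // /pass_iter take0.
rewrite (big_ord_ltS _ lt_mn) (pass_iterS s x (Ordinal lt_mn)) /= IH 1?ltnW //.
by rewrite scalerDr opprD addrA.
Qed.

Lemma epoch_grad_order s x (i : 'I_n) :
  epoch_grad g eta s x (s i) = g (s i) (pass_iter g eta s x i).
Proof. by rewrite /epoch_grad index_order_seq. Qed.

Lemma pass_iter_end s x :
  pass_iter g eta s x n = x - eta *: \sum_(j < n) epoch_grad g eta s x j.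
Proof.
rewrite pass_iterE // [X in _ = _ - _ *: X](reindex_inj (@perm_inj _ s)) /=.
congr (_ - _ *: _); apply: eq_big => [i|i _]; first by rewrite ltn_ord.
by rewrite epoch_grad_order.
Qed.

Variable L : R.
Hypotheses (L_ge0 : 0 <= L) (eta_ge0 : 0 <= eta).
Hypothesis g_lip : forall i x y, norm2 (g i x - g i y) <= L * norm2 (x - y).
Hypothesis eta_small : eta * n%:R * L <= 2^-1.

(* Induction on m: the gradients met so far differ from those at y by at most
   L times the drift, which eta * n * L <= 1/2 lets us absorb. *)
Lemma pass_iter_drift s (y G : 'rV[R]_d) (P : R) :
  (forall m, (m <= n)%N ->
     norm2 (\sum_(i < n | (i < m)%N) (g (s i) y - G)) <= P) ->
  forall m, (m <= n)%N ->
  norm2 (pass_iter g eta s y m - y) <= 2 * eta * (n%:R * norm2 G + P).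
Proof.
move=> prefixP; set B := 2 * eta * _.
have P0 : 0 <= P by apply: le_trans (prefixP 0%N isT); exact: norm2_ge0.
have G0 := norm2_ge0 G.
have B0 : 0 <= B by rewrite /B !mulr_ge0 // addr_ge0 // mulr_ge0.
elim/ltn_ind => m IH le_mn.
rewrite pass_iterE // addrAC subrr add0r norm2N norm2Z ger0_norm //.
set S := \sum_(i < n | _) _.
have -> : S = \sum_(i < n | (i < m)%N) (g (s i) y - G)
   + \sum_(i < n | (i < m)%N) (g (s i) (pass_iter g eta s y i) - g (s i) y)
   + \sum_(i < n | (i < m)%N) G.
  rewrite -!big_split; apply: eq_bigr => i _.
  by rewrite /= [_ - G + _]addrC addrA subrK subrK.
have gapB : norm2 (\sum_(i < n | (i < m)%N)
              (g (s i) (pass_iter g eta s y i) - g (s i) y)) <= n%:R * (L * B).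
  apply: le_trans (ler_norm2_sum _ _ _) _; apply: ler_sum_const; last exact: mulr_ge0.
  move=> i lt_im; apply: le_trans (g_lip _ _ _) _; apply: ler_wpM2l => //.
  exact: IH lt_im (ltnW (ltn_ord i)).
have GB : norm2 (\sum_(i < n | (i < m)%N) G) <= n%:R * norm2 G.
  by apply: le_trans (ler_norm2_sum _ _ _) _; exact: ler_sum_const.
have SB := ler_wpM2l eta_ge0 (le_trans (ler_norm2D _ _)
  (lerD (le_trans (ler_norm2D _ _) (lerD (prefixP m le_mn) gapB)) GB)).
apply: le_trans SB _.
have : eta * n%:R * L * B <= 2^-1 * B by apply: ler_wpM2r.
rewrite /B; nra.
Qed.

End Epoch.

Lemma herding_bound_prefix (R : realType) d n (herd : ('I_n -> 'rV[R]_d) -> 'S_n)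
    (H M : R) (c : 'I_n -> 'rV[R]_d) :
  herding_bound herd H -> 0 <= H -> 0 <= M -> \sum_(j < n) c j = 0 ->
  (forall j, norm2 (c j) <= M) ->
  forall k, (k <= n)%N ->
  norm2 (\sum_(i < n | (i < k)%N) c (herd (rescale c) i)) <= H * M.
Proof.
move=> herdH H0 M0 c_sum cM k le_kn.
set cm := \big[Num.max/0]_(i < n) norm2 (c i).
have cmM : cm <= M by apply: bigmax_le.
have c_cm i : norm2 (c i) <= cm.
  exact: (@le_bigmax_seq _ _ _ _ _ i) (mem_index_enum i) _.
have HM : 0 <= H * M by apply: mulr_ge0.
have [cm0|cm_neq0] := eqVneq cm 0.
  have c0 i : c i = 0 by apply: norm2_eq0; apply: le_anti; rewrite norm2_ge0 -cm0 c_cm.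
  by rewrite big1 ?norm2_0 // => i _; rewrite c0.
have cm_ge0 : 0 <= cm.
  by rewrite /cm; elim/big_ind: _ => // [x y x0 _|i _]; [rewrite le_max x0|exact: norm2_ge0].
have cm_gt0 : 0 < cm by rewrite lt_neqAle eq_sym cm_neq0.
have rescaleE i : rescale c i = cm^-1 *: c i by rewrite /rescale -/cm (negbTE cm_neq0).
case: k le_kn => [_|k le_kn]; first by rewrite big_pred0 ?norm2_0.
have rescale_le1 i : norm2 (rescale c i) <= 1.
  by rewrite rescaleE norm2Z ger0_norm ?invr_ge0 // ler_pdivrMl // mulr1.
have rescale_sum : \sum_(i < n) rescale c i = 0.
  by under eq_bigr => i _ do rewrite rescaleE; rewrite -scaler_sumr c_sum scaler0.
have := herdH _ rescale_le1 rescale_sum k.+1 le_kn.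
under eq_bigr => i _ do rewrite rescaleE.
rewrite -scaler_sumr norm2Z ger0_norm ?invr_ge0 // ler_pdivrMl // => /le_trans; apply.
by rewrite mulrC ler_wpM2l // ltW.
Qed.

Section GraB.
Variables (R : realType) (d n : nat) (f : 'I_n -> 'rV[R]_d -> R)
  (g : 'I_n -> 'rV[R]_d -> 'rV[R]_d) (L tau nu H eta : R)
  (herd : ('I_n -> 'rV[R]_d) -> 'S_n) (s1 : 'S_n) (x01 : 'rV[R]_d).

Definition Favg (x : 'rV[R]_d) := (n%:R)^-1 * \sum_(i < n) f i x.
Definition gradFavg (x : 'rV[R]_d) := (n%:R)^-1 *: \sum_(i < n) g i x.

Hypotheses (L_gt0 : 0 < L) (tau_ge0 : 0 <= tau) (nu_ge0 : 0 <= nu).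
Hypotheses (H_gt0 : 0 < H) (H_le_n : H <= n%:R).
Hypothesis f_grad : forall i, is_gradient (f i) (g i).
Hypothesis g_lip : forall i x y, norm2 (g i x - g i y) <= L * norm2 (x - y).
Hypothesis g_var : forall i x, norm2 (g i x - gradFavg x) <= tau * norm2 (gradFavg x) + nu.

Lemma n_gt0 : 0 < n%:R :> R.
Proof. exact: lt_le_trans H_gt0 H_le_n. Qed.

Lemma ler_norm2_avg (v : 'I_n -> 'rV[R]_d) c : 0 <= c ->
  (forall j, norm2 (v j) <= c) -> norm2 ((n%:R)^-1 *: \sum_(j < n) v j) <= c.
Proof.
move=> c0 vc; rewrite norm2Z ger0_norm ?invr_ge0 ?ler0n // ler_pdivrMl ?n_gt0 //.
by apply: le_trans (ler_norm2_sum _ _ _) _; exact: ler_sum_const.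
Qed.

Lemma gradFavg_lip x y : norm2 (gradFavg x - gradFavg y) <= L * norm2 (x - y).
Proof.
rewrite /gradFavg -scalerBr -sumrB; apply: ler_norm2_avg => [|j]; last exact: g_lip.
exact: mulr_ge0 (ltW L_gt0) (norm2_ge0 _).
Qed.

Lemma Favg_descent x y :
  Favg y <= Favg x + dotv (gradFavg x) (y - x) + L * norm2 (y - x) ^+ 2.
Proof.
have sum_le : \sum_(i < n) f i y <=
    \sum_(i < n) (f i x + dotv (g i x) (y - x) + L * norm2 (y - x) ^+ 2).
  by apply: ler_sum => i _; exact: descent_lemma (ltW L_gt0) (f_grad i) (g_lip i) x y.
rewrite !big_split /= sumr_const card_ord -mulr_natl in sum_le.
rewrite /Favg /gradFavg dotvZl dotv_suml -[X in _ <= _ + X](mulKf (lt0r_neq0 n_gt0)).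
by rewrite -!mulrDr ler_wpM2l // invr_ge0 ler0n.
Qed.

Hypothesis eta_ge0 : 0 <= eta.
(* That is, r <= 1/6 for the coefficient r of the drift recursion below. *)
Hypothesis step_small : 14 * (eta * n%:R * L) * (1 + tau) <= 6^-1.
Hypothesis herdH : herding_bound herd H.

Let u := eta * n%:R * L.
Let r := 14 * u * (1 + tau).
Let noise := 2 * eta * L * H * nu.

Let u_ge0 : 0 <= u.
Proof. by rewrite /u !mulr_ge0 // ltW. Qed.

Let r_ge0 : 0 <= r.
Proof. by apply: mulr_ge0; [apply: mulr_ge0 u_ge0|apply: addr_ge0]. Qed.

Let u_small : u <= 84^-1.
Proof. have := mulr_ge0 u_ge0 tau_ge0; have := step_small; rewrite -/u; nra. Qed.

Let start k := (GraB_state g eta herd s1 x01 k).2.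
Let sigma k := (GraB_state g eta herd s1 x01 k).1.
Let grad_start k := gradFavg (start k).
Let mean_grad k := (n%:R)^-1 *: \sum_(j < n) epoch_grad g eta (sigma k) (start k) j.
Let centered_grad k j := epoch_grad g eta (sigma k) (start k) j - mean_grad k.

Let startS k : start k.+1 = pass_iter g eta (sigma k) (start k) n.
Proof. by []. Qed.

Let sigmaS k : sigma k.+1 = herd (rescale (centered_grad k)).
Proof. by []. Qed.

Lemma sum_centered_grad k : \sum_(j < n) centered_grad k j = 0.
Proof.
rewrite sumrB sumr_const card_ord -scaler_nat scalerA mulfV ?scale1r ?subrr //.
exact: lt0r_neq0 n_gt0.
Qed.

(* [drift k] bounds L times the distance travelled within epoch k. *)
Fixpoint drift k := match k with
  | 0 => r * norm2 (grad_start 0) + 2 * u * nu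
  | k'.+1 => r * norm2 (grad_start k'.+1) + noise + r * drift k'
  end.

Lemma drift_ge0 k : 0 <= drift k.
Proof.
have r0 := r_ge0; have u0 := u_ge0.
have noise0 : 0 <= noise by rewrite /noise !mulr_ge0 // ltW.
have rG k' : 0 <= r * norm2 (grad_start k') by rewrite mulr_ge0 ?norm2_ge0.
elim: k => [|k IH] /=; first exact: addr_ge0 (rG 0) (mulr_ge0 (mulr_ge0 _ u0) nu_ge0).
by apply: addr_ge0; [exact: addr_ge0 (rG _) noise0|exact: mulr_ge0].
Qed.

Let drift_bounded k := forall m, (m <= n)%N ->
  L * norm2 (pass_iter g eta (sigma k) (start k) m - start k) <= drift k.

Section DriftConsequences.
Variable k : nat.
Hypothesis drift_k : drift_bounded k.

Lemma epoch_grad_near_start j :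
  norm2 (epoch_grad g eta (sigma k) (start k) j - g j (start k)) <= drift k.
Proof. by apply: le_trans (g_lip _ _ _) (drift_k (ltnW (index_order_seq_lt _ _))). Qed.

Lemma next_start_near : L * norm2 (start k.+1 - start k) <= drift k.
Proof. by rewrite startS; exact: drift_k. Qed.

Lemma next_grad_near j :
  norm2 (g j (start k.+1) - epoch_grad g eta (sigma k) (start k) j) <= 2 * drift k.
Proof.
apply: le_trans (g_lip _ _ _) _.
set p := pass_iter g eta (sigma k) (start k) _.
have p_near : L * norm2 (p - start k) <= drift k.
  exact: drift_k (ltnW (index_order_seq_lt _ _)).
have : norm2 (start k.+1 - p) <= norm2 (start k.+1 - start k) + norm2 (p - start k).
  by rewrite (norm2_distC p); apply: le_trans (ler_norm2D _ _); rewrite addrA subrK.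
move=> /(ler_wpM2l (ltW L_gt0)); have := next_start_near; lra.
Qed.

Lemma mean_grad_near : norm2 (grad_start k - mean_grad k) <= drift k.
Proof.
rewrite /grad_start /gradFavg /mean_grad -scalerBr -sumrB.
apply: ler_norm2_avg => [|j]; first exact: drift_ge0.
by rewrite norm2_distC; exact: epoch_grad_near_start.
Qed.

Lemma centered_grad_le j :
  norm2 (centered_grad k j) <= tau * norm2 (grad_start k) + nu + 2 * drift k.
Proof.
have -> : centered_grad k j =
    (epoch_grad g eta (sigma k) (start k) j - g j (start k))
    + (g j (start k) - grad_start k) + (grad_start k - mean_grad k).
  by rewrite /centered_grad /= !addrA !subrK.
apply: le_trans (ler_norm2D _ _) _; apply: le_trans (lerD (ler_norm2D _ _) (lexx _)) _.
have := epoch_grad_near_start j; have := g_var j (start k); have := mean_grad_near.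
rewrite /grad_start; lra.
Qed.

Lemma next_centered_grad_near j :
  norm2 (g j (start k.+1) - grad_start k.+1 - centered_grad k j) <= 4 * drift k.
Proof.
have -> : g j (start k.+1) - grad_start k.+1 - centered_grad k j =
    (g j (start k.+1) - epoch_grad g eta (sigma k) (start k) j)
    - (grad_start k.+1 - mean_grad k).
  by rewrite /centered_grad /= !opprD !opprK addrACA.
apply: le_trans (ler_norm2D _ _) _; rewrite norm2N.
have : norm2 (grad_start k.+1 - mean_grad k) <= 2 * drift k.
  rewrite /grad_start /gradFavg /mean_grad -scalerBr -sumrB.
  apply: ler_norm2_avg => [|i]; last exact: next_grad_near.
  by rewrite mulr_ge0 ?drift_ge0.
have := next_grad_near j; lra.
Qed.

(* Epoch k + 1 visits the examples in the herded order of the centered gradients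
   of epoch k, which are close to the centered gradients at the new start. *)
Lemma next_prefix_le m : (m <= n)%N ->
  norm2 (\sum_(i < n | (i < m)%N) (g (sigma k.+1 i) (start k.+1) - grad_start k.+1))
    <= H * (tau * norm2 (grad_start k) + nu + 2 * drift k) + n%:R * (4 * drift k).
Proof.
move=> le_mn.
rewrite (eq_bigr (fun i => centered_grad k (sigma k.+1 i) +
    (g (sigma k.+1 i) (start k.+1) - grad_start k.+1 - centered_grad k (sigma k.+1 i))));
  last by move=> i _; rewrite [RHS]addrCA subrr addr0.
rewrite big_split /=; apply: le_trans (ler_norm2D _ _) _; apply: lerD.
  rewrite sigmaS; apply: herding_bound_prefix => //; first exact: ltW.
  - by rewrite !addr_ge0 ?mulr_ge0 ?norm2_ge0 ?drift_ge0.
  - exact: sum_centered_grad.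
  - exact: centered_grad_le.
apply: le_trans (ler_norm2_sum _ _ _) _.
apply: ler_sum_const => [i _|]; first exact: next_centered_grad_near.
by rewrite mulr_ge0 ?drift_ge0.
Qed.

Lemma grad_start_le_next : norm2 (grad_start k) <= norm2 (grad_start k.+1) + drift k.
Proof.
have gap : norm2 (grad_start k - grad_start k.+1) <= drift k.
  by apply: le_trans (gradFavg_lip _ _) _; rewrite norm2_distC; exact: next_start_near.
have := ler_norm2D (grad_start k.+1) (grad_start k - grad_start k.+1).
by rewrite addrC subrK; lra.
Qed.

End DriftConsequences.

Let u_half : eta * n%:R * L <= 2^-1.
Proof. by have := u_small; rewrite /u; lra. Qed.

Lemma drift_bounded0 : drift_bounded 0.
Proof.
have prefix_le m : (m <= n)%N ->
    norm2 (\sum_(i < n | (i < m)%N) (g (sigma 0 i) (start 0) - grad_start 0))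
      <= n%:R * (tau * norm2 (grad_start 0) + nu).
  move=> _; apply: le_trans (ler_norm2_sum _ _ _) _.
  by apply: ler_sum_const => [i _|]; [exact: g_var|rewrite addr_ge0 ?mulr_ge0 ?norm2_ge0].
move=> m le_mn.
apply: le_trans (ler_wpM2l (ltW L_gt0)
  (pass_iter_drift (ltW L_gt0) eta_ge0 g_lip u_half prefix_le le_mn)) _.
set G := norm2 (grad_start 0); have G0 : 0 <= G := norm2_ge0 _.
have -> : L * (2 * eta * (n%:R * G + n%:R * (tau * G + nu)))
    = 2 * u * (1 + tau) * G + 2 * u * nu by rewrite /u; ring.
rewrite /= lerD2r ler_wpM2r // /r ler_wpM2r ?addr_ge0 //; have := u_ge0; lra.
Qed.

Lemma drift_boundedS k : drift_bounded k -> drift_bounded k.+1.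
Proof.
move=> drift_k m le_mn.
apply: le_trans (ler_wpM2l (ltW L_gt0)
  (pass_iter_drift (ltW L_gt0) eta_ge0 g_lip u_half (next_prefix_le drift_k) le_mn)) _.
have G_le := grad_start_le_next drift_k.
set E := drift k; set G0 := norm2 (grad_start k); set G1 := norm2 (grad_start k.+1).
have E0 : 0 <= E := drift_ge0 k.
have G0_ge0 : 0 <= G0 := norm2_ge0 _; have G1_ge0 : 0 <= G1 := norm2_ge0 _.
have u0 := u_ge0; set w := eta * L * H.
have w0 : 0 <= w by rewrite !mulr_ge0 // ltW.
have wu : w <= u.
  by rewrite /u /w [eta * n%:R * L]mulrAC; apply: ler_wpM2l; rewrite ?mulr_ge0 // ltW.
rewrite [drift k.+1]/= -/E -/G1 /r /noise.
have -> : L * (2 * eta * (n%:R * G1 + (H * (tau * G0 + nu + 2 * E) + n%:R * (4 * E)))) =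
    2 * u * G1 + 2 * w * tau * G0 + 2 * eta * L * H * nu + 4 * w * E + 8 * u * E.
  by rewrite /u /w; ring.
have t1 : w * (tau * G0) <= u * (tau * (G1 + E)).
  by apply: ler_pM => //; [exact: mulr_ge0|exact: ler_wpM2l].
have t2 : w * E <= u * E by apply: ler_wpM2r.
have t3 : 0 <= u * tau * E := mulr_ge0 (mulr_ge0 u0 tau_ge0) E0.
have t4 : 0 <= u * tau * G1 := mulr_ge0 (mulr_ge0 u0 tau_ge0) G1_ge0.
nra.
Qed.

Lemma drift_boundedP k : drift_bounded k.
Proof. by elim: k => [|k]; [exact: drift_bounded0|exact: drift_boundedS]. Qed.

Let epoch_step := eta * n%:R.

(* One epoch is a gradient step of length [epoch_step] on Favg, up to an error
   of norm at most [drift k]. *)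
Lemma epoch_descent k :
  Favg (start k.+1) <= Favg (start k) - epoch_step / 2 * norm2 (grad_start k) ^+ 2
                       + epoch_step / 2 * drift k ^+ 2.
Proof.
have s0 : 0 <= epoch_step by rewrite mulr_ge0 ?ler0n.
have sL : L * epoch_step <= 2^-1 by rewrite mulrC.
set G := grad_start k; set e := mean_grad k - G.
have e_le : norm2 e <= drift k.
  by rewrite /e norm2_distC; exact: mean_grad_near (drift_boundedP k).
have step : start k.+1 - start k = - (epoch_step *: (G + e)).
  rewrite /e [G + _]addrC subrK startS pass_iter_end addrAC subrr add0r /mean_grad scalerA.
  by rewrite /epoch_step -mulrA mulfV ?mulr1 // lt0r_neq0 // n_gt0.
have := Favg_descent (start k) (start k.+1).
rewrite step -/(grad_start k) -/G norm2N norm2Z ger0_norm // dotvNr dotvZr.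
clearbody e; rewrite dotvDr -sqr_norm2 exprMn.
have sqrGe : norm2 (G + e) ^+ 2 = norm2 G ^+ 2 + 2 * dotv G e + norm2 e ^+ 2.
  by rewrite !sqr_norm2 dotvDl !dotvDr (dotvC e G); ring.
have e2_le : norm2 e ^+ 2 <= drift k ^+ 2.
  by rewrite lerXn2r ?nnegrE ?norm2_ge0 // (le_trans (norm2_ge0 e) e_le).
have Ge0 : 0 <= norm2 (G + e) ^+ 2 by rewrite exprn_ge0 ?norm2_ge0.
have quad : L * (epoch_step ^+ 2 * norm2 (G + e) ^+ 2) <= epoch_step / 2 * norm2 (G + e) ^+ 2.
  have := ler_wpM2r (mulr_ge0 s0 Ge0) sL; nra.
rewrite sqrGe in quad Ge0 * => desc.
have := ler_wpM2l (divr_ge0 s0 (ler0n _ 2)) e2_le.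
nra.
Qed.

Variables (mu Fstar : R).
Hypothesis mu_gt0 : 0 < mu.
Hypothesis Favg_ge : forall x, Fstar <= Favg x.
Hypothesis PL : forall x, mu * (Favg x - Fstar) <= 2^-1 * norm2 (gradFavg x) ^+ 2.

(* A gradient step of length 1/(2L) from x stays above Fstar. *)
Lemma sqr_norm2_gradFavg_le x : norm2 (gradFavg x) ^+ 2 <= 4 * L * (Favg x - Fstar).
Proof.
set G := gradFavg x; set c := (2 * L)^-1.
have c_gt0 : 0 < c by rewrite invr_gt0 mulr_gt0.
have := Favg_descent x (x - c *: G).
have -> : x - c *: G - x = - (c *: G) by rewrite addrAC subrr add0r.
rewrite dotvNr dotvZr norm2N norm2Z (ger0_norm (ltW c_gt0)) -/G -sqr_norm2.
have := Favg_ge (x - c *: G).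
have -> : L * (c * norm2 G) ^+ 2 = c / 2 * norm2 G ^+ 2.
  by rewrite /c exprMn; field; rewrite gt_eqF.
have -> : 4 * L * (Favg x - Fstar) = (c / 2)^-1 * (Favg x - Fstar).
  by rewrite /c; field; rewrite gt_eqF.
move=> lb ub; rewrite ler_pdivlMl ?divr_gt0 //; lra.
Qed.

Lemma Favg_subopt_le0 x : 2 * L < mu -> Favg x - Fstar <= 0.
Proof.
move=> Lmu; have := PL x; have := sqr_norm2_gradFavg_le x.
have := Favg_ge x; rewrite -subr_ge0; nra.
Qed.

Hypothesis mu_le_2L : mu <= 2 * L.

Let gap k := Favg (start k) - Fstar.
Let lyapunov k := gap k.+1 + epoch_step * drift k ^+ 2.
Let rho := 1 - 3 / 4 * epoch_step * mu.

Let epoch_step_ge0 : 0 <= epoch_step.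
Proof. by rewrite mulr_ge0 ?ler0n. Qed.

Let epoch_step_mu_small : epoch_step * mu <= 42^-1.
Proof.
have := ler_wpM2l epoch_step_ge0 mu_le_2L; have := u_small.
rewrite /u -/epoch_step; lra.
Qed.

Let rho_ge0 : 0 <= rho.
Proof. by have := epoch_step_mu_small; rewrite /rho; lra. Qed.

Let r_small : r <= 6^-1.
Proof. exact: step_small. Qed.

Let sqr_r_small : r ^+ 2 <= 36^-1.
Proof. by have := r_ge0; have := r_small; rewrite expr2; nra. Qed.

Lemma lyapunov0_le : lyapunov 0 <= gap 0 + nu ^+ 2 / L.
Proof.
have desc := epoch_descent 0.
have s0 := epoch_step_ge0; have u0 := u_ge0; have us := u_small.
set G := norm2 (grad_start 0); have G0 : 0 <= G := norm2_ge0 _.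
have drift0_sqr : drift 0 ^+ 2 <= 2 * (r ^+ 2 * G ^+ 2) + 2 * (2 * u * nu) ^+ 2.
  by rewrite /= -/G; have := sqr_ge0 (r * G - 2 * u * nu); nra.
have T1 : epoch_step * (r ^+ 2 * G ^+ 2) <= epoch_step / 36 * G ^+ 2.
  have := ler_wpM2l s0 (ler_wpM2r (exprn_ge0 2 G0) sqr_r_small); lra.
have T2 : 12 * epoch_step * (u ^+ 2 * nu ^+ 2) <= nu ^+ 2 / L.
  have u3 : u ^+ 3 <= 12^-1.
    have : u ^+ 2 <= 1 by rewrite expr2; nra.
    by move=> /(ler_wpM2l u0); rewrite -exprS; lra.
  have -> : 12 * epoch_step * (u ^+ 2 * nu ^+ 2) <= nu ^+ 2 / L =
            (12 * u ^+ 3 * nu ^+ 2 <= nu ^+ 2).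
    by rewrite ler_pdivlMr // /u /epoch_step; congr (_ <= _); ring.
  by have := sqr_ge0 nu; nra.
have := ler_wpM2l s0 drift0_sqr.
have : 0 <= epoch_step * G ^+ 2 by rewrite mulr_ge0 ?exprn_ge0.
rewrite /lyapunov /gap -/G in desc *; nra.
Qed.

Lemma lyapunov_contract k :
  lyapunov k.+1 <= rho * lyapunov k + 9 / 2 * epoch_step * noise ^+ 2.
Proof.
have desc := epoch_descent k.+1.
have s0 := epoch_step_ge0; have sm := epoch_step_mu_small.
set G := norm2 (grad_start k.+1); have G0 : 0 <= G := norm2_ge0 _.
have E0 := drift_ge0 k.
have driftS_sqr : drift k.+1 ^+ 2 <=
    3 * (r ^+ 2 * G ^+ 2) + 3 * noise ^+ 2 + 3 * (r ^+ 2 * drift k ^+ 2).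
  by rewrite -!exprMn; exact: sqr_add3_le.
have T1 : epoch_step * (r ^+ 2 * G ^+ 2) <= epoch_step / 36 * G ^+ 2.
  have := ler_wpM2l s0 (ler_wpM2r (exprn_ge0 2 G0) sqr_r_small); lra.
have T2 : epoch_step * (r ^+ 2 * drift k ^+ 2) <= epoch_step / 36 * drift k ^+ 2.
  have := ler_wpM2l s0 (ler_wpM2r (exprn_ge0 2 E0) sqr_r_small); lra.
have PLk : epoch_step * mu * (Favg (start k.+1) - Fstar) <= epoch_step / 2 * G ^+ 2.
  by have := ler_wpM2l s0 (PL (start k.+1)); rewrite !mulrA; lra.
have q0 : 0 <= epoch_step * drift k ^+ 2 by rewrite mulr_ge0 ?exprn_ge0.
have q1 : epoch_step * mu * (epoch_step * drift k ^+ 2) <= 42^-1 * (epoch_step * drift k ^+ 2).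
  exact: ler_wpM2r.
have q2 : 0 <= epoch_step * mu * (epoch_step * drift k ^+ 2).
  by rewrite mulr_ge0 // mulr_ge0 // ltW.
have := ler_wpM2l s0 driftS_sqr.
have : 0 <= epoch_step * G ^+ 2 by rewrite mulr_ge0 ?exprn_ge0.
rewrite /lyapunov /rho /gap /= -/G in desc *; nra.
Qed.

Lemma lyapunov_le k : lyapunov k <= rho ^+ k * lyapunov 0 + 6 * noise ^+ 2 / mu.
Proof.
elim: k => [|k IH].
  by rewrite expr0 mul1r lerDl divr_ge0 ?mulr_ge0 ?sqr_ge0 // ltW.
apply: le_trans (lyapunov_contract k) _.
apply: le_trans (lerD (ler_wpM2l rho_ge0 IH) (lexx _)) _.
have fixed : rho * (6 * noise ^+ 2 / mu) + 9 / 2 * epoch_step * noise ^+ 2 =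
    6 * noise ^+ 2 / mu by rewrite /rho; field; rewrite gt_eqF.
by rewrite mulrDr -addrA fixed [rho ^+ k.+1]exprS mulrA.
Qed.

Theorem GraB_rate K :
  Favg (GraB_state g eta herd s1 x01 K.+1).2 - Fstar <=
    (1 - 3 / 4 * (eta * n%:R) * mu) ^+ K * (Favg x01 - Fstar + nu ^+ 2 / L)
    + 6 * (2 * eta * L * H * nu) ^+ 2 / mu.
Proof.
have gap_le : gap K.+1 <= lyapunov K.
  by rewrite /lyapunov lerDl mulr_ge0 ?exprn_ge0 ?drift_ge0.
apply: le_trans gap_le (le_trans (lyapunov_le K) _).
by rewrite lerD2r ler_wpM2l ?exprn_ge0 //; exact: lyapunov0_le.
Qed.

End GraB.

Lemma LambertW0_spec (R : realType) (a : R) :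
  0 < a -> 0 < LambertW0 a /\ LambertW0 a * expR (LambertW0 a) = a.
Proof.
move=> a0.
have [c c0a ca] : exists2 c : R, c \in `[0, a] & c * expR c = a.
  have cont : {within `[0, a], continuous (fun w : R => w * expR w)}.
    apply: continuous_subspaceT => x.
    exact: (@continuousM _ _ id (@expR R) _ cvg_id (@continuous_expR _ _)).
  have ea : 1 <= expR a by rewrite -expR0 ler_expR ltW.
  have a_between : Num.min (0 * expR 0) (a * expR a) <= a
                   <= Num.max (0 * expR 0) (a * expR a).
    rewrite mul0r; apply/andP; split; first by rewrite ge_min ltW.
    by rewrite le_max ler_peMr ?orbT // ltW.
  exact: IVT (ltW a0) cont a_between.
have ex : exists w : R, -1 <= w /\ w * expR w = a.
  exists c; split=> //; move: c0a; rewrite in_itv /= => /andP[c0 _].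
  by apply: le_trans c0; rewrite lerN10.
have [_ Wa] := xgetPex 0 ex; rewrite /LambertW0; split=> //.
rewrite ltNge; apply/negP => W0; move: Wa.
set W := xget _ _ => Wa.
have : W * expR W <= 0 by rewrite mulr_le0_ge0 // expR_ge0.
by rewrite Wa; lra.
Qed.

Lemma LambertW0_le_ln (R : realType) (a : R) :
  0 < a -> LambertW0 a <= ln (expR 1 + a).
Proof.
move=> a0; have [W0 Wa] := LambertW0_spec a0; set W := LambertW0 a in W0 Wa *.
have [W1|W1] := lerP W 1.
  apply: le_trans W1 _; rewrite -[X in X <= _](expRK 1) ler_ln ?posrE ?expR_gt0 //.
    by rewrite lerDl ltW.
  by rewrite addr_gt0 // expR_gt0.
have : expR W < expR 1 + a.
  rewrite -Wa; apply: lt_le_trans (_ : W * expR W <= _).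
    by rewrite ltr_pMl // expR_gt0.
  by rewrite lerDr ltW // expR_gt0.
move=> /ltW eW; rewrite -[X in X <= _]expRK ler_ln ?posrE ?expR_gt0 //.
by rewrite addr_gt0 // expR_gt0.
Qed.

Lemma LambertW0_le_ln_pow (R : realType) (S a : R) :
  expR 1 <= S -> 3 <= S -> 0 < a -> a <= 2 * S ^+ 17 -> LambertW0 a <= 18 * ln S.
Proof.
move=> eS S3 a_gt0 aS; apply: le_trans (LambertW0_le_ln a_gt0) _.
have S_le : S <= S ^+ 17 by rewrite -[X in X <= _]expr1 ler_eXnr //; lra.
have S17 : 3 * S ^+ 17 <= S ^+ 18 by rewrite [S ^+ 18]exprS ler_wpM2r ?exprn_ge0 //; lra.
rewrite mulr_natl -lnXn ?ler_ln ?posrE ?exprn_gt0 ?addr_gt0 ?expR_gt0 //; lra.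
Qed.

Lemma lambert_arg_le (R : realFieldType) (S D0 L mu nu H n K : R) :
  1 <= S -> 0 <= D0 <= S -> 0 < L -> L^-1 <= S -> 0 < mu <= S ->
  0 < nu <= S -> nu^-1 <= S -> 0 < H -> H^-1 <= S -> 0 < n <= S -> 0 < K <= S ->
  (D0 + nu ^+ 2 / L) * mu ^+ 3 * n ^+ 2 * K ^+ 2 / (192 * H ^+ 2 * L ^+ 2 * nu ^+ 2)
    <= 2 * S ^+ 17.
Proof.
move=> S1 /andP[D0_ge0 D0S] L_gt0 LS /andP[mu_gt0 muS] /andP[nu_gt0 nuS] nuS'
  H_gt0 HS /andP[n_gt0 nS] /andP[K_gt0 KS].
have num_le : D0 + nu ^+ 2 / L <= 2 * S ^+ 3.
  have : nu ^+ 2 / L <= S ^+ 3.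
    have nu0 := ltW nu_gt0.
    rewrite [S ^+ 3]exprSr; apply: ler_pM => //; first exact: exprn_ge0.
      by rewrite invr_ge0 ltW.
    by rewrite !expr2; apply: ler_pM.
  have : D0 <= S ^+ 3 by apply: le_trans D0S _; rewrite -[X in X <= _]expr1 ler_eXnr.
  lra.
have -> : (D0 + nu ^+ 2 / L) * mu ^+ 3 * n ^+ 2 * K ^+ 2
            / (192 * H ^+ 2 * L ^+ 2 * nu ^+ 2) = (D0 + nu ^+ 2 / L) *
     \prod_(x <- [:: mu; mu; mu; n; n; K; K; 192^-1; H^-1; H^-1; L^-1; L^-1; nu^-1; nu^-1]) x.
  by rewrite !big_cons big_nil; field; rewrite !gt_eqF.
have c192 : (0 : R) <= 192^-1 <= S by rewrite invr_ge0 ler0n /=; lra.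
have L0 := ltW L_gt0; have mu0 := ltW mu_gt0; have nu0 := ltW nu_gt0.
have H0 := ltW H_gt0; have n0 := ltW n_gt0; have K0 := ltW K_gt0.
have inv_in (x : R) : 0 <= x -> x^-1 <= S -> 0 <= x^-1 <= S by rewrite invr_ge0 => -> ->.
have s_in : all (fun x => 0 <= x <= S)
    [:: mu; mu; mu; n; n; K; K; 192^-1; H^-1; H^-1; L^-1; L^-1; nu^-1; nu^-1].
  by rewrite /= mu0 muS n0 nS K0 KS c192 !inv_in.
rewrite (_ : 2 * S ^+ 17 = 2 * S ^+ 3 * S ^+ 14); last by rewrite -mulrA -exprD.
apply: ler_pM num_le (prod_le_exp_size s_in).
- by rewrite addr_ge0 // divr_ge0 // exprn_ge0.
- by rewrite big_seq; apply: prodr_ge0 => x /(allP s_in)/andP[].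
Qed.

Lemma lambert_param_le_ln (R : realType) (n K : nat) (L mu tau nu H D0 : R) :
  0 < L -> 0 < mu -> 0 <= tau -> 0 < nu -> 0 < H -> (0 < n)%N -> (0 < K)%N -> 0 <= D0 ->
  let Lam := ln (expR 1 + n%:R + K%:R + L + L^-1 + mu + mu^-1 + tau + nu + nu^-1
                 + H + H^-1 + D0) in
  let W := LambertW0 ((D0 + nu ^+ 2 / L) * mu ^+ 3 * n%:R ^+ 2 * K%:R ^+ 2
                      / (192 * H ^+ 2 * L ^+ 2 * nu ^+ 2)) in
  1 <= Lam /\ 0 < W <= 18 * Lam.
Proof.
move=> L_gt0 mu_gt0 tau_ge0 nu_gt0 H_gt0 n_gt0 K_gt0 D0_ge0.
set S := expR 1 + _ + _ + _ + _ + _ + _ + _ + _ + _ + _ + _ + _ => Lam W.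
have e2 : 2 <= expR 1 :> R by have := expR_ge1Dx (1 : R); lra.
have n1 : 1 <= n%:R :> R by rewrite ler1n.
have K1 : 1 <= K%:R :> R by rewrite ler1n.
have Li : 0 < L^-1 by rewrite invr_gt0.
have mui : 0 < mu^-1 by rewrite invr_gt0.
have nui : 0 < nu^-1 by rewrite invr_gt0.
have Hi : 0 < H^-1 by rewrite invr_gt0.
have eS : expR 1 <= S by rewrite /S; lra.
have S3 : 3 <= S by rewrite /S; lra.
have a_gt0 : 0 < (D0 + nu ^+ 2 / L) * mu ^+ 3 * n%:R ^+ 2 * K%:R ^+ 2
                 / (192 * H ^+ 2 * L ^+ 2 * nu ^+ 2).
  rewrite divr_gt0 ?mulr_gt0 ?exprn_gt0 ?ltr0n //.
  by rewrite ltr_pwDr // divr_gt0 // exprn_gt0.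
split; first by rewrite -(expRK 1) ler_ln ?posrE ?expR_gt0 //; lra.
rewrite (LambertW0_spec a_gt0).1; apply: LambertW0_le_ln_pow => //.
apply: lambert_arg_le; rewrite ?ltr0n ?D0_ge0 ?mu_gt0 ?nu_gt0 ?n_gt0 ?K_gt0 //=;
  rewrite /S; lra.
Qed.

Lemma epochs_large (R : realFieldType) (mu L tau Lam K : R) :
  0 < mu -> 0 < L -> 0 <= tau -> 1 <= Lam -> mu <= 2 * L ->
  3024 * (L / mu) * (tau + 1) * Lam <= K ->
  3024 * L * (tau + 1) * Lam <= mu * K /\ 1512 * Lam <= K.
Proof.
move=> mu_gt0 L_gt0 tau_ge0 Lam_ge1 mu_le K_large.
have LtauLam : 0 <= L * tau * Lam.
  by rewrite !mulr_ge0 //; [exact: ltW | lra].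
have LLam : 0 <= L * Lam by rewrite mulr_ge0 //; [exact: ltW | lra].
have K_large' : 3024 * L * (tau + 1) * Lam <= mu * K.
  have -> : 3024 * L * (tau + 1) * Lam = mu * (3024 * (L / mu) * (tau + 1) * Lam).
    by field; rewrite gt_eqF.
  by apply: ler_wpM2l K_large; exact: ltW.
have K_ge0 : 0 <= K by rewrite -(pmulr_rge0 _ mu_gt0); lra.
split=> //; rewrite -(ler_pM2l L_gt0).
have := ler_wpM2r K_ge0 mu_le; lra.
Qed.

(* 3024 = 6 * 28 * 18: the left side is 28 W L (1 + tau) / (mu K). *)
Lemma lambert_step_small (R : realType) (mu L tau n K W Lam : R) :
  0 < mu -> 0 < L -> 0 <= tau -> 0 < n -> 0 < K -> W <= 18 * Lam ->
  3024 * L * (tau + 1) * Lam <= mu * K ->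
  14 * (2 / (mu * n * K) * W * n * L) * (1 + tau) <= 6^-1.
Proof.
move=> mu_gt0 L_gt0 tau_ge0 n_gt0 K_gt0 W_le K_large.
have -> : 14 * (2 / (mu * n * K) * W * n * L) * (1 + tau)
          = 28 * (W * (L * (1 + tau))) / (mu * K).
  by field; rewrite !gt_eqF.
rewrite ler_pdivrMr ?mulr_gt0 //.
have := ler_wpM2r (mulr_ge0 (ltW L_gt0) (addr_ge0 ler01 tau_ge0)) W_le; lra.
Qed.

Lemma lambert_rate (R : realType) (mu L H nu n D : R) (K : nat) :
  0 < mu -> 0 < L -> 0 < H -> 0 < nu -> 0 < n -> 0 < D -> (3 <= K)%N ->
  let a := D * mu ^+ 3 * n ^+ 2 * K%:R ^+ 2 / (192 * H ^+ 2 * L ^+ 2 * nu ^+ 2) in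
  let W := LambertW0 a in
  let eta := 2 / (mu * n * K%:R) * W in
  3 * W <= 2 * K%:R ->
  (1 - 3 / 4 * (eta * n) * mu) ^+ K.-1 * D + 6 * (2 * eta * L * H * nu) ^+ 2 / mu
    <= (192 * W + 96 * W ^+ 2) * (H ^+ 2 * L ^+ 2 * nu ^+ 2 / (mu ^+ 3 * n ^+ 2 * K%:R ^+ 2)).
Proof.
move=> mu_gt0 L_gt0 H_gt0 nu_gt0 n_gt0 D_gt0 K3 a W eta W_le.
have K_gt0 : 0 < K%:R :> R by rewrite ltr0n (leq_trans _ K3).
have a_gt0 : 0 < a by rewrite divr_gt0 ?mulr_gt0 ?exprn_gt0.
have [W_gt0 Wa] := LambertW0_spec a_gt0; rewrite -/W in W_gt0 Wa.
set x := 3 * W / (2 * K%:R).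
have rhoE : 1 - 3 / 4 * (eta * n) * mu = 1 - x.
  by rewrite /eta /x; field; rewrite !gt_eqF.
have x_le1 : x <= 1 by rewrite /x ler_pdivrMr ?mulr_gt0 // mul1r.
have decay : (1 - x) ^+ K.-1 <= W / a.
  have exp_decay : (1 - x) ^+ K.-1 <= expR (K.-1%:R * - x).
    by rewrite expRM_natl lerXn2r ?nnegrE ?expR_ge0 ?subr_ge0 // expR_ge1Dx.
  apply: le_trans exp_decay _.
  have -> : W / a = expR (- W) by rewrite expRN -Wa; field; rewrite !gt_eqF ?expR_gt0.
  have K3R : 3 <= K%:R :> R by rewrite ler_nat.
  have -> : K.-1%:R * - x = - W - W * (K%:R - 3) / (2 * K%:R).
    by rewrite -subn1 natrB ?(leq_trans _ K3) // /x; field; rewrite gt_eqF.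
  by rewrite ler_expR gerDl oppr_le0 divr_ge0 ?mulr_ge0 ?subr_ge0 // ltW.
set T := H ^+ 2 * L ^+ 2 * nu ^+ 2 / (mu ^+ 3 * n ^+ 2 * K%:R ^+ 2).
have decayT : W / a * D = 192 * W * T by rewrite /a /T; field; rewrite !gt_eqF.
have noiseT : 6 * (2 * eta * L * H * nu) ^+ 2 / mu = 96 * W ^+ 2 * T.
  by rewrite /eta /T; field; rewrite !gt_eqF.
rewrite rhoE noiseT (mulrDl (192 * W)) lerD2r -decayT.
by apply: ler_wpM2r decay; exact: ltW.
Qed.

Lemma lambert_rate_ln (R : realType) (mu L H nu n D Lam : R) (K : nat) :
  0 < mu -> 0 < L -> 0 < H -> 0 < nu -> 0 < n -> 0 < D -> 1 <= Lam ->
  1512 * Lam <= K%:R ->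
  let a := D * mu ^+ 3 * n ^+ 2 * K%:R ^+ 2 / (192 * H ^+ 2 * L ^+ 2 * nu ^+ 2) in
  let eta := 2 / (mu * n * K%:R) * LambertW0 a in
  LambertW0 a <= 18 * Lam ->
  (1 - 3 / 4 * (eta * n) * mu) ^+ K.-1 * D + 6 * (2 * eta * L * H * nu) ^+ 2 / mu
    <= 180 * 192 * Lam ^+ 2 * (H ^+ 2 * L ^+ 2 * nu ^+ 2 / (mu ^+ 3 * n ^+ 2 * K%:R ^+ 2)).
Proof.
move=> mu_gt0 L_gt0 H_gt0 nu_gt0 n_gt0 D_gt0 Lam_ge1 K_large a eta W_le.
have K3 : (3 <= K)%N by rewrite -(ler_nat R); lra.
have a_gt0 : 0 < a by rewrite divr_gt0 ?mulr_gt0 ?exprn_gt0 // ltr0n (leq_trans _ K3).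
have [W_gt0 _] := LambertW0_spec a_gt0.
apply: le_trans (lambert_rate mu_gt0 L_gt0 H_gt0 nu_gt0 n_gt0 D_gt0 K3 _) _; first lra.
rewrite ler_pM2r ?divr_gt0 ?mulr_gt0 ?exprn_gt0 ?ltr0n ?(leq_trans _ K3) // -/a.
have W2 : LambertW0 a ^+ 2 <= (18 * Lam) ^+ 2.
  by rewrite lerXn2r ?nnegrE //; [exact: ltW | lra].
have : Lam <= Lam ^+ 2 by rewrite expr2 ler_peMl //; lra.
lra.
Qed.

Theorem proposition10 :
  exists C1 C2 p : nat,
  forall (R : realType) (d n : nat)
    (f : 'I_n -> 'rV[R]_d -> R) (g : 'I_n -> 'rV[R]_d -> 'rV[R]_d)
    (L mu tau nu H Fstar : R)
    (herd : ('I_n -> 'rV[R]_d) -> 'S_n)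
    (s1 : 'S_n) (x01 : 'rV[R]_d) (K : nat),
  let F := fun x => (n%:R)^-1 * \sum_(i < n) f i x in
  let gradF := fun x => (n%:R)^-1 *: \sum_(i < n) g i x in
  0 < L -> 0 < mu -> 0 <= tau -> 0 < nu -> 0 < H ->
  (forall i, is_gradient (f i) (g i)) ->
  (forall i x y, norm2 (g i x - g i y) <= L * norm2 (x - y)) ->
  (forall x, Fstar <= F x) ->
  (forall e, 0 < e -> exists x, F x < Fstar + e) ->
  (forall x, 2^-1 * norm2 (gradF x) ^+ 2 >= mu * (F x - Fstar)) ->
  (forall i x, norm2 (g i x - gradF x) <= tau * norm2 (gradF x) + nu) ->
  herding_bound herd H ->
  H <= n%:R ->
  (0 < K)%N ->
  let a := (F x01 - Fstar + nu ^+ 2 / L) * mu ^+ 3 * n%:R ^+ 2 * K%:R ^+ 2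
           / (192 * H ^+ 2 * L ^+ 2 * nu ^+ 2) in
  let eta := 2 / (mu * n%:R * K%:R) * LambertW0 a in
  let Lam := ln (expR 1 + n%:R + K%:R + L + L^-1 + mu + mu^-1 + tau + nu + nu^-1
                 + H + H^-1 + (F x01 - Fstar)) in
  K%:R >= C1%:R * (L / mu) * (tau + 1) * Lam ->
  F (GraB_state g eta herd s1 x01 K).2 - Fstar
    <= C2%:R * Lam ^+ p * (H ^+ 2 * L ^+ 2 * nu ^+ 2)
         / (mu ^+ 3 * n%:R ^+ 2 * K%:R ^+ 2).
Proof.
(* Written as products so that [natrM] avoids large unary literals. *)
exists (56 * 54)%N, (180 * 192)%N, 2%N.
move=> R d n f g L mu tau nu H Fstar herd s1 x01 K F gradF L_gt0 mu_gt0 tau_ge0 nu_gt0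
  H_gt0 f_grad g_lip F_ge _ PL g_var herdH H_le_n K_gt0 a eta Lam.
rewrite !natrM => K_large; rewrite -[leRHS]mulrA.
have n_pos : 0 < n%:R :> R := n_gt0 H_gt0 H_le_n.
have K_pos : 0 < K%:R :> R by rewrite ltr0n.
have D0_ge0 : 0 <= F x01 - Fstar by rewrite subr_ge0.
have [Lam_ge1 /andP[W_gt0 W_le]] : 1 <= Lam /\ 0 < LambertW0 a <= 18 * Lam.
  by apply: lambert_param_le_ln; rewrite // -(ltr0n R).
have [mu_le|mu_gt] := lerP mu (2 * L); last first.
  apply: le_trans (Favg_subopt_le0 L_gt0 H_gt0 H_le_n f_grad g_lip F_ge PL _ mu_gt) _.
  by rewrite mulr_ge0 ?divr_ge0 ?mulr_ge0 ?exprn_ge0 //; lra.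
have [K_large' K_ge] : 3024 * L * (tau + 1) * Lam <= mu * K%:R /\ 1512 * Lam <= K%:R.
  by apply: epochs_large => //; lra.
have eta_ge0 : 0 <= eta by rewrite mulr_ge0 ?divr_ge0 ?mulr_ge0 ?ltW.
have step_small := lambert_step_small mu_gt0 L_gt0 tau_ge0 n_pos K_pos W_le K_large'.
have := GraB_rate s1 x01 L_gt0 tau_ge0 (ltW nu_gt0) H_gt0 H_le_n f_grad g_lip g_var eta_ge0
  step_small herdH mu_gt0 PL mu_le K.-1.
rewrite (prednK K_gt0) => /le_trans; apply.
apply: lambert_rate_ln W_le => //.
by rewrite ltr_pwDr // divr_gt0 // exprn_gt0.
Qed.
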